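(* Assume the standing hypotheses and definitions in the context. Then $H(t,G(t,y))=y$ for all $t\in\mathbb{R}$ and $y\in\mathbb{R}^n$.
   Context: Standing hypotheses: $A:\mathbb{R}\to\mathbb{R}^{n\times n}$ is continuous and bounded, $T(t,s)$ is the evolution operator of $x'=A(t)x$. $\mu:\mathbb{R}\to(0,\infty)$ is an increasing differentiable growth rate: $\mu(0)=1$, $\lim_{t\to-\infty}\mu(t)=0$, $\lim_{t\to+\infty}\mu(t)=+\infty$. The system $x'=A(t)x$ admits an algebraic dichotomy: projections $P(s)$, $Q(s)=I-P(s)$, constants $K,\alpha>0$ with $T(t,s)P(s)=P(t)T(t,s)$, $\|T(t,s)P(s)\|\le K(\mu(t)/\mu(s))^{-\alpha}$ ($t\ge s$), $\|T(t,s)Q(s)\|\le K(\mu(s)/\mu(t))^{-\alpha}$ ($t\le s$). $f:\mathbb{R}\times\mathbb{R}^n\to\mathbb{R}^n$ is continuous, $\|f(t,x)\|\le\beta\mu'(t)\mu^{-1}(t)$, $\|f(t,x_1)-f(t,x_2)\|\le\gamma\mu'(t)\mu^{-1}(t)\|x_1-x_2\|$ for constants $\beta,\gamma\ge0$, and $6K\gamma\alpha^{-1}<1$. $X(t,\tau,\xi)$ (resp. $Y(t,\tau,\xi)$) is the solution of $x'=A(t)x+f(t,x)$ (resp. $x'=A(t)x$) with value $\xi$ at $t=\tau$. $h(t,(\tau,\xi))$ is the unique solution bounded on $\mathbb{R}$ of $Z'=A(t)Z-f(t,X(t,\tau,\xi))$, and $g(t,(\tau,\xi))$ the unique solution bounded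 on $\mathbb{R}$ of $Z'=A(t)Z+f(t,Y(t,\tau,\xi)+Z)$ (both exist and are unique under these hypotheses). Define $H(t,x)=x+h(t,(t,x))$ and $G(t,y)=y+g(t,(t,y))$. *)

(* Vectors of R^n are column vectors 'cV[R]_n with the (sup) norm of
   MathComp-Analysis; matrix bounds are stated as induced operator-norm
   bounds (forall x, |M x| <= c |x|). *)
From HB Require Import structures.
From mathcomp Require Import all_boot all_order all_algebra.
From mathcomp Require Import all_classical all_reals all_analysis.
Set Implicit Arguments. Unset Strict Implicit. Unset Printing Implicit Defensive.
Import Order.TTheory GRing.Theory Num.Theory.
Import numFieldNormedType.Exports.
Local Open Scope ring_scope.
Local Open Scope classical_set_scope.

Section Defs.
Variables (R : realType) (n : nat).
Notation vec := 'cV[R]_n.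
Notation mat := 'M[R]_n.

Definition evolution_operator (A : R -> mat) (T : R -> R -> mat) : Prop :=
  (forall s, T s s = 1%:M) /\
  (forall (t s : R), is_derive t (1 : R) (fun u : R => T u s) (A t *m T t s)).

Definition growth_rate (mu : R -> R) : Prop :=
  (forall t, 0 < mu t) /\
  (forall s t, s < t -> mu s < mu t) /\
  (forall t : R, derivable mu t (1 : R)) /\
  mu 0 = 1 /\
  (mu x @[x --> -oo] --> 0) /\
  (mu x @[x --> +oo] --> +oo).

Definition algebraic_dichotomy (mu : R -> R) (T : R -> R -> mat)
    (P : R -> mat) (K alpha : R) : Prop :=
  0 < K /\ 0 < alpha /\
  (forall s, P s *m P s = P s) /\
  (forall t s, T t s *m P s = P t *m T t s) /\
  (forall t s (x : vec), s <= t ->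
     `|T t s *m P s *m x| <= K * ((mu t / mu s) `^ (- alpha)) * `|x|) /\
  (forall t s (x : vec), t <= s ->
     `|T t s *m (1%:M - P s) *m x| <= K * ((mu s / mu t) `^ (- alpha)) * `|x|).

Definition solves (F : R -> vec -> vec) (x : R -> vec) : Prop :=
  forall t : R, is_derive t (1 : R) x (F t (x t)).

Definition bounded_on_R (x : R -> vec) : Prop :=
  exists M : R, forall t, `|x t| <= M.

Definition H_of (h : R -> R -> vec -> vec) (t : R) (x : vec) : vec :=
  x + h t t x.
Definition G_of (g : R -> R -> vec -> vec) (t : R) (y : vec) : vec :=
  y + g t t y.

End Defs.

(* For a difference u of two solutions of x' = A(t) x + f(t, x) one has
   |u'| <= (n M + gamma mu'/mu) |u|, M bounding the entries of A.  Since the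
   right-hand side integrates to L(s) = n M s + gamma ln mu(s), the sum of
   squares of the entries of u, weighted by exp(-+ 2 n L), is monotone on each
   side of a zero of u, so u vanishes identically (Gronwall).  Hence, for
   x = G(t, y), X(., t, x) = Y(., t, y) + g(., t, y): both solve the perturbed
   equation with value x at t.  Then h(., t, x) + g(., t, y) is a bounded
   solution z of the linear equation, and the dichotomy forces it to vanish:
   the stable part of z(t) is at most K (mu(t)/mu(s))^-alpha sup |z| for every
   s <= t, the unstable part likewise for s >= t, and mu(t)/mu(s) is unbounded.
   At time t this reads h(t, t, x) = - g(t, t, y), i.e. H(t, G(t, y)) = y. *)

From HB Require Import structures.
From mathcomp Require Import all_boot all_order all_algebra.
From mathcomp Require Import all_classical all_reals all_analysis.
From mathcomp Require Import ring lra.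
Set Implicit Arguments. Unset Strict Implicit. Unset Printing Implicit Defensive.
Import Order.TTheory GRing.Theory Num.Theory.
Import numFieldNormedType.Exports.
Local Open Scope ring_scope.

Section mx_norm.
Context {R : realDomainType}.

Lemma mx_norm_coef_le m k (M : 'M[R]_(m, k)) i j : `|M i j| <= `|M|.
Proof. by rewrite [leRHS]/Num.Def.normr /= mx_normrE; exact: (le_bigmax _ _ (i, j)). Qed.

Lemma mx_norm_le m k (M : 'M[R]_(m, k)) c :
  0 <= c -> (forall i j, `|M i j| <= c) -> `|M| <= c.
Proof.
move=> c_ge0 Mc; rewrite [leLHS]/Num.Def.normr /= mx_normrE.
by apply: bigmax_le => // -[i j].
Qed.

Lemma mx_norm_mulmx_le m k p (M : 'M[R]_(m, k)) (N : 'M[R]_(k, p)) :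
  `|M *m N| <= k%:R * `|M| * `|N|.
Proof.
apply: mx_norm_le => [|i j]; first by rewrite !mulr_ge0.
rewrite mxE (le_trans (ler_norm_sum _ _ _)) //.
apply: le_trans (_ : \sum_(l < k) `|M| * `|N| <= _); last first.
  by rewrite sumr_const card_ord -mulrA mulr_natl.
by apply: ler_sum => l _; rewrite normrM ler_pM // mx_norm_coef_le.
Qed.

Lemma mx_norm_dot_le m k (M N : 'M[R]_(m, k)) :
  `|\sum_(ij : 'I_m * 'I_k) M ij.1 ij.2 * N ij.1 ij.2| <= (m * k)%:R * `|M| * `|N|.
Proof.
rewrite (le_trans (ler_norm_sum _ _ _)) //.
apply: le_trans (_ : \sum_(ij : 'I_m * 'I_k) `|M| * `|N| <= _); last first.
  by rewrite sumr_const card_prod !card_ord -mulrA mulr_natl.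
by apply: ler_sum => ij _; rewrite normrM ler_pM // mx_norm_coef_le.
Qed.

Definition mx_sqsum m k (M : 'M[R]_(m, k)) :=
  \sum_(ij : 'I_m * 'I_k) M ij.1 ij.2 ^+ 2.

Lemma mx_sqsum_ge0 m k (M : 'M[R]_(m, k)) : 0 <= mx_sqsum M.
Proof. by apply: sumr_ge0 => ij _; rewrite sqr_ge0. Qed.

Lemma mx_sqsum0 m k : mx_sqsum (0 : 'M[R]_(m, k)) = 0.
Proof. by apply: big1 => ij _; rewrite mxE expr0n. Qed.

Lemma mx_sqsum_eq0 m k (M : 'M[R]_(m, k)) : mx_sqsum M = 0 -> M = 0.
Proof.
move/eqP; rewrite psumr_eq0 => [/allP M0|ij _]; last exact: sqr_ge0.
apply/matrixP => i j; rewrite mxE.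
by have /= := M0 (i, j) (mem_index_enum _); rewrite sqrf_eq0 => /eqP.
Qed.

Lemma sqr_mx_norm_le_sqsum m k (M : 'M[R]_(m, k)) : `|M| ^+ 2 <= mx_sqsum M.
Proof.
have [->|/mx_norm_neq0 [ij M_max]] := eqVneq `|M| 0.
  by rewrite expr0n mx_sqsum_ge0.
have -> : `|M| = `|M ij.1 ij.2| by exact: M_max.
rewrite /mx_sqsum (bigD1 ij) //= ler_wpDr ?real_normK ?num_real //.
by apply: sumr_ge0 => ? _; rewrite sqr_ge0.
Qed.

End mx_norm.

Section mx_derive.
Context {R : realFieldType} {V : normedModType R}.

Lemma is_derive_mxP m k (M : V -> 'M[R]_(m, k)) t v dM :
  is_derive t v M dM <-> forall i j, is_derive t v (fun s => M s i j) (dM i j).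
Proof.
split=> [[M_der <-] i j | coef_der].
  have /derivable_mxP /(_ i j) coef_ex := M_der.
  by apply: DeriveDef => //; rewrite derive_mx // mxE.
have M_der : derivable M t v by apply/derivable_mxP => i j; case: (coef_der i j).
apply: DeriveDef => //; rewrite derive_mx //; apply/matrixP => i j; rewrite mxE.
by case: (coef_der i j).
Qed.

Lemma is_derive_mulmxr m k p (M : V -> 'M[R]_(m, k)) t v dM (N : 'M[R]_(k, p)) :
  is_derive t v M dM -> is_derive t v (fun s => M s *m N) (dM *m N).
Proof.
move=> /is_derive_mxP M_der; apply/is_derive_mxP => i j.
have -> : (fun s => (M s *m N) i j) = \sum_(l < k) (N l j \*: fun s => M s i l).
  by apply/funext => s; rewrite fct_sumE mxE; apply: eq_bigr => l _; rewrite mulrC.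
rewrite mxE.
apply: is_derive_eq (is_derive_sum (fun l => is_deriveZ (N l j) (M_der i l))) _.
by apply: eq_bigr => l _; rewrite mulrC.
Qed.

Lemma is_derive_mx_sqsum m k (M : V -> 'M[R]_(m, k)) t v dM :
  is_derive t v M dM ->
  is_derive t v (fun s => mx_sqsum (M s))
    ((\sum_(ij : 'I_m * 'I_k) M t ij.1 ij.2 * dM ij.1 ij.2) *+ 2).
Proof.
move=> /is_derive_mxP M_der.
have -> : (fun s => mx_sqsum (M s)) =
    \sum_(i < m) \sum_(j < k) (fun s => M s i j * M s i j).
  apply/funext => s.
  rewrite /mx_sqsum -(pair_bigA _ (fun i j => M s i j ^+ 2)) fct_sumE.
  by apply: eq_bigr => i _; rewrite fct_sumE; apply: eq_bigr => j _; rewrite expr2.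
apply: is_derive_eq (is_derive_sum (fun i =>
  is_derive_sum (fun j => is_deriveM (M_der i j) (M_der i j)))) _.
rewrite -(pair_bigA _ (fun i j => M t i j * dM i j)) -sumrMnl.
by apply: eq_bigr => i _; rewrite -sumrMnl; apply: eq_bigr => j _; rewrite mulr2n.
Qed.

End mx_derive.

Section gronwall.
Context {R : realType}.

Lemma is_derive_mulr_id (c t : R) : is_derive t 1 (fun s => c * s) c.
Proof.
by apply: is_derive_eq (is_deriveZ c (is_derive_id t 1)) _; rewrite /GRing.scale /= mulr1.
Qed.

Lemma is_derive_ge0_ndecr (f df : R -> R) :
  (forall s : R, is_derive s 1 f (df s)) -> (forall s, 0 <= df s) ->
  {homo f : x y / x <= y}.
Proof.
move=> f_der df_ge0 x y xy.
have f_cont : continuous f.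
  by move=> s; apply/differentiable_continuous/derivable1_diffP; case: (f_der s).
apply: (@ger0_derive1_le_cc _ f x y); rewrite ?in_itv /= ?lexx ?xy //.
- by move=> s _; rewrite derive1E derive_val.
- exact: continuous_subspaceT.
Qed.

Lemma gronwall_eq0 (q dq L k : R -> R) (t0 : R) :
  (forall s : R, is_derive s 1 q (dq s)) -> (forall s : R, is_derive s 1 L (k s)) ->
  (forall s, 0 <= q s) -> (forall s, `|dq s| <= k s * q s) ->
  q t0 = 0 -> forall s, q s = 0.
Proof.
move=> q_der L_der q_ge0 dq_le qt0 s.
have weighted_der (b r : R) : is_derive r 1 (q * (expR \o (b \*: L)))
    (expR (b * L r) * (dq r + b * k r * q r)).
  apply: is_derive_eq (is_deriveM (q_der r)
    (is_derive1_comp (is_derive_expR _) (is_deriveZ b (L_der r)))) _.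
  rewrite /GRing.scale /=; ring.
apply/eqP; rewrite eq_le q_ge0 andbT.
have [t0s|st0] := leP t0 s.
- have := is_derive_ge0_ndecr (fun r => is_deriveN (weighted_der (-1) r)) _ t0s.
  rewrite !fctE qt0 mul0r oppr0 oppr_ge0 => weighted_le0.
  rewrite -(pmulr_lle0 _ (expR_gt0 ((-1 \*: L) s))) weighted_le0 // => r.
  rewrite oppr_ge0 mulr_ge0_le0 ?expR_ge0 //.
  by have := dq_le r; rewrite ler_norml => /andP[]; lra.
- have := is_derive_ge0_ndecr (weighted_der 1) _ (ltW st0).
  rewrite !fctE qt0 mul0r => weighted_le0.
  rewrite -(pmulr_lle0 _ (expR_gt0 ((1 \*: L) s))) weighted_le0 // => r.
  rewrite mulr_ge0 ?expR_ge0 //.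
  by have := dq_le r; rewrite ler_norml => /andP[]; lra.
Qed.

Lemma gronwall_mx_eq0 m p (u du : R -> 'M[R]_(m, p)) (L c : R -> R) (t0 : R) :
  (forall s : R, is_derive s 1 u (du s)) -> (forall s : R, is_derive s 1 L (c s)) ->
  (forall s, 0 <= c s) -> (forall s, `|du s| <= c s * `|u s|) ->
  u t0 = 0 -> forall s, u s = 0.
Proof.
move=> u_der L_der c_ge0 du_le ut0 s; apply: mx_sqsum_eq0.
apply: (gronwall_eq0 (fun r => is_derive_mx_sqsum (u_der r))
  (fun r => is_deriveZ ((m * p)%:R *+ 2) (L_der r)) (fun r => mx_sqsum_ge0 _) _ _
  (t0 := t0)).
- move=> r; rewrite normrMn /GRing.scale /= -mulrA.
  have norm_du_le : `|u r| * `|du r| <= c r * mx_sqsum (u r).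
    apply: le_trans (_ : `|u r| * (c r * `|u r|) <= _); first by rewrite ler_wpM2l.
    by rewrite mulrCA -expr2 ler_wpM2l // sqr_mx_norm_le_sqsum.
  apply: le_trans (_ : ((m * p)%:R * (`|u r| * `|du r|)) *+ 2 <= _).
    by rewrite lerMn2r mulrA mx_norm_dot_le orbT.
  by rewrite -mulrnAl ler_wpM2l.
- by rewrite /= ut0 mx_sqsum0.
Qed.

End gronwall.

Section growth_rate.
Context {R : realType} (mu : R -> R).
Hypothesis mu_growth : growth_rate mu.

Lemma growth_rate_gt0 (t : R) : 0 < mu t.
Proof. by case: mu_growth. Qed.

Lemma is_derive_ln_growth_rate (t : R) :
  is_derive t 1 (fun s => ln (mu s)) (derive1 mu t / mu t).
Proof.
have [_ [_ [mu_der _]]] := mu_growth.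
rewrite mulrC; apply: is_derive1_comp (is_derive1_ln (growth_rate_gt0 t)) _.
by rewrite derive1E; exact: derivableP.
Qed.

Lemma is_derive_lin_ln_growth_rate (c d t : R) :
  is_derive t 1 (fun s => c * s + d * ln (mu s)) (c + d * (derive1 mu t / mu t)).
Proof.
apply: is_deriveD (is_derive_mulr_id c t) _.
exact: is_derive_eq (is_deriveZ d (is_derive_ln_growth_rate t)) _.
Qed.

Lemma derive1_growth_rate_ge0 (t : R) : 0 <= derive1 mu t.
Proof.
have [_ [mu_incr [mu_der _]]] := mu_growth.
apply: (@incr_derive1_ge0 _ mu setT); last by rewrite interiorT.
- by move=> x _; exact: mu_der.
- by move=> x y _ _; exact: mu_incr.
Qed.

Lemma growth_rate_ratio_past (t X : R) :
  0 < X -> exists2 s, s <= t & X <= mu t / mu s.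
Proof.
have [_ [_ [_ [_ [mu_Ny _]]]]] := mu_growth.
move=> X_gt0; have mutX_gt0 : 0 < mu t / X by rewrite divr_gt0 ?growth_rate_gt0.
have [r [r_real mu_small]] := (cvgr0Pnorm_lt _).1 mu_Ny _ mutX_gt0.
exists (Num.min t (r - 1)); first by rewrite ge_min lexx.
have /mu_small : Num.min t (r - 1) < r by rewrite gt_min ltrBlDr ltrDl ltr01 orbT.
rewrite ger0_norm ?(ltW (growth_rate_gt0 _)) // => /ltW.
by rewrite !ler_pdivlMr ?growth_rate_gt0 // mulrC.
Qed.

Lemma growth_rate_ratio_future (t X : R) : exists2 s, t <= s & X <= mu s / mu t.
Proof.
have [_ [_ [_ [_ [_ mu_y]]]]] := mu_growth.
have [r [r_real mu_large]] := cvgry_ge mu_y (X * mu t).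
exists (Num.max t (r + 1)); first by rewrite le_max lexx.
rewrite ler_pdivlMr ?growth_rate_gt0 //; apply: mu_large.
by rewrite lt_max ltrDl ltr01 orbT.
Qed.

End growth_rate.

Section powR_decay.
Context {R : realType}.

Lemma powRN_eventually_le (al e : R) : 0 < al -> 0 < e ->
  exists2 X, 0 < X & forall a, X <= a -> a `^ (- al) <= e.
Proof.
move=> al_gt0 e_gt0; exists (expR (- ln e / al)) => [|a Xa]; first exact: expR_gt0.
have a_gt0 : 0 < a by apply: lt_le_trans Xa; exact: expR_gt0.
rewrite /powR gt_eqF // -[leRHS](lnK e_gt0) ler_expR.
have : - ln e / al <= ln a by rewrite -ler_expR lnK.
by rewrite ler_pdivrMr // mulrC; lra.
Qed.

Lemma eq0_powR_decay (V : normedZmodType R) (w : V) (C al : R) :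
  0 < al -> 0 <= C ->
  (forall X, 0 < X -> exists2 a, X <= a & `|w| <= C * a `^ (- al)) -> w = 0.
Proof.
move=> al_gt0 C_ge0 w_decay; apply/normr0_eq0/eqP.
rewrite eq_le normr_ge0 andbT; apply/ler_addgt0Pr => e e_gt0; rewrite add0r.
have Ce_gt0 : 0 < e / (C + 1) by rewrite divr_gt0 //; lra.
have [X X_gt0 X_small] := powRN_eventually_le al_gt0 Ce_gt0.
have [a Xa w_le] := w_decay X X_gt0.
apply: (le_trans w_le); apply: le_trans (_ : C * (e / (C + 1)) <= _).
  by rewrite ler_wpM2l // X_small.
by rewrite mulrCA ger_pMr // ler_pdivrMr ?mul1r; lra.
Qed.

End powR_decay.

Section linear_system.
Context {R : realType} {n : nat} (A : R -> 'M[R]_n) (M : R).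
Hypothesis A_bound : forall t, `|A t| <= M.

Let M_ge0 : 0 <= M. Proof. exact: le_trans (A_bound 0). Qed.

Lemma linear_field_le t (x : 'cV[R]_n) : `|A t *m x| <= n%:R * M * `|x|.
Proof.
apply: le_trans (mx_norm_mulmx_le _ _) _.
by rewrite ler_wpM2r // ler_wpM2l.
Qed.

Lemma evolution_operator_solution (T : R -> R -> 'M[R]_n) (z : R -> 'cV[R]_n) :
  evolution_operator A T -> solves (fun t x => A t *m x) z ->
  forall t s, z t = T t s *m z s.
Proof.
move=> [T_id T_der] z_sol t s; apply/eqP; rewrite -subr_eq0; apply/eqP.
pose v r := z r - T r s *m z s.
have v_der (r : R) : is_derive r 1 v (A r *m v r).
  apply: is_derive_eq (is_deriveB (z_sol r) (is_derive_mulmxr (z s) (T_der r s))) _.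
  by rewrite /v mulmxBr mulmxA.
apply: (gronwall_mx_eq0 v_der (is_derive_mulr_id (n%:R * M))
  (fun=> mulr_ge0 (ler0n _ _) M_ge0) _ (t0 := s)).
- by move=> r; exact: linear_field_le.
- by rewrite /v T_id mul1mx subrr.
Qed.

Lemma bounded_solution_eq0 (T : R -> R -> 'M[R]_n) (mu : R -> R)
    (P : R -> 'M[R]_n) (K al : R) (z : R -> 'cV[R]_n) :
  evolution_operator A T -> growth_rate mu -> algebraic_dichotomy mu T P K al ->
  solves (fun t x => A t *m x) z -> bounded_on_R z -> forall t, z t = 0.
Proof.
move=> T_evol mu_growth [K_gt0 [al_gt0 [_ [TP_comm [P_decay Q_decay]]]]] z_sol.
move=> [Mz z_le] t.
have z_eq := evolution_operator_solution T_evol z_sol.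
have Mz_ge0 : 0 <= Mz by exact: le_trans (z_le 0).
have KMz_ge0 : 0 <= K * Mz by rewrite mulr_ge0 // ltW.
have Pz : P t *m z t = 0.
  apply: (eq0_powR_decay al_gt0 KMz_ge0) => X X_gt0.
  have [s st Xs] := growth_rate_ratio_past mu_growth t X_gt0.
  exists (mu t / mu s) => //.
  rewrite (z_eq t s) mulmxA -TP_comm (le_trans (P_decay _ _ _ st)) //.
  by rewrite mulrAC ler_wpM2r ?powR_ge0 // ler_wpM2l ?(ltW K_gt0).
have Qz : (1%:M - P t) *m z t = 0.
  apply: (eq0_powR_decay al_gt0 KMz_ge0) => X X_gt0.
  have [s ts Xs] := growth_rate_ratio_future mu_growth t X.
  exists (mu s / mu t) => //.
  rewrite (z_eq t s) mulmxA mulmxBl mul1mx -TP_comm.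
  rewrite -{1}[T t s]mulmx1 -mulmxBr (le_trans (Q_decay _ _ _ ts)) //.
  by rewrite mulrAC ler_wpM2r ?powR_ge0 // ler_wpM2l ?(ltW K_gt0).
by rewrite -[z t]mul1mx -(subrK (P t) 1%:M) mulmxDl Qz Pz addr0.
Qed.

Lemma perturbed_solution_unique (mu : R -> R) (f : R -> 'cV[R]_n -> 'cV[R]_n)
    (gamma : R) (x1 x2 : R -> 'cV[R]_n) (t0 : R) :
  growth_rate mu -> 0 <= gamma ->
  (forall t y1 y2, `|f t y1 - f t y2| <= gamma * (derive1 mu t / mu t) * `|y1 - y2|) ->
  solves (fun t x => A t *m x + f t x) x1 -> solves (fun t x => A t *m x + f t x) x2 ->
  x1 t0 = x2 t0 -> forall t, x1 t = x2 t.
Proof.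
move=> mu_growth gamma_ge0 f_lip x1_sol x2_sol x12_t0 t.
apply/eqP; rewrite -subr_eq0; apply/eqP.
pose F s := A s *m (x1 s - x2 s) + (f s (x1 s) - f s (x2 s)).
have u_der (s : R) : is_derive s 1 (fun r => x1 r - x2 r) (F s).
  apply: is_derive_eq (is_deriveB (x1_sol s) (x2_sol s)) _.
  by rewrite /F mulmxBr opprD addrACA.
apply: (gronwall_mx_eq0 u_der (is_derive_lin_ln_growth_rate mu_growth (n%:R * M) gamma)
  _ _ (t0 := t0)).
- move=> s; rewrite addr_ge0 ?mulr_ge0 ?divr_ge0 ?derive1_growth_rate_ge0 //.
  by rewrite invr_ge0 (ltW (growth_rate_gt0 mu_growth s)).
- move=> s; rewrite /F mulrDl (le_trans (ler_normD _ _)) //.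
  by rewrite lerD ?linear_field_le ?f_lip.
- by rewrite x12_t0 subrr.
Qed.

End linear_system.

(* The continuity hypotheses, the bound by beta and the smallness condition
   6 K gamma / alpha < 1 only serve the existence of X, Y, h and g, which is
   assumed here. *)
Theorem lemma3p7 (R : realType) (n : nat)
  (A : R -> 'M[R]_n) (T : R -> R -> 'M[R]_n) (mu : R -> R)
  (P : R -> 'M[R]_n) (K alpha : R)
  (f : R -> 'cV[R]_n -> 'cV[R]_n) (beta gamma : R)
  (X Y h g : R -> R -> 'cV[R]_n -> 'cV[R]_n) :
  continuous A ->
  (exists M : R, forall t, `|A t| <= M) ->
  evolution_operator A T ->
  growth_rate mu ->
  algebraic_dichotomy mu T P K alpha ->
  continuous (fun p : R * 'cV[R]_n => f p.1 p.2) ->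
  0 <= beta -> 0 <= gamma ->
  (forall t x, `|f t x| <= beta * (derive1 mu t / mu t)) ->
  (forall t x1 x2, `|f t x1 - f t x2| <= gamma * (derive1 mu t / mu t) * `|x1 - x2|) ->
  6 * K * gamma / alpha < 1 ->
  (forall tau xi, X tau tau xi = xi /\
     solves (fun t x => A t *m x + f t x) (fun t => X t tau xi)) ->
  (forall tau xi, Y tau tau xi = xi /\
     solves (fun t x => A t *m x) (fun t => Y t tau xi)) ->
  (forall tau xi, bounded_on_R (fun t => h t tau xi) /\
     solves (fun t z => A t *m z - f t (X t tau xi)) (fun t => h t tau xi)) ->
  (forall tau xi, bounded_on_R (fun t => g t tau xi) /\
     solves (fun t z => A t *m z + f t (Y t tau xi + z)) (fun t => g t tau xi)) ->
  forall (t : R) (y : 'cV[R]_n), H_of h t (G_of g t y) = y.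
Proof.
move=> _ [M A_bound] T_evol mu_growth dich _ _ gamma_ge0 _ f_lip _
  X_sol Y_sol h_sol g_sol t y.
rewrite /H_of /G_of; set x := y + g t t y.
have [Xt X_solves] := X_sol t x.
have [Yt Y_solves] := Y_sol t y.
have [[Mh h_le] h_solves] := h_sol t x.
have [[Mg g_le] g_solves] := g_sol t y.
have XYg : forall s, X s t x = Y s t y + g s t y.
  apply: (perturbed_solution_unique A_bound mu_growth gamma_ge0 f_lip X_solves _
    (t0 := t)).
    move=> s; apply: is_derive_eq (is_deriveD (Y_solves s) (g_solves s)) _.
    by rewrite mulmxDr addrA.
  by rewrite Xt Yt.
have hg_sol : solves (fun s z => A s *m z) (fun s => h s t x + g s t y).
  move=> s; apply: is_derive_eq (is_deriveD (h_solves s) (g_solves s)) _.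
  by rewrite -XYg addrACA addNr addr0 mulmxDr.
have hg_bnd : bounded_on_R (fun s => h s t x + g s t y).
  by exists (Mh + Mg) => s; exact: le_trans (ler_normD _ _) (lerD (h_le s) (g_le s)).
have hg0 := bounded_solution_eq0 A_bound T_evol mu_growth dich hg_sol hg_bnd t.
by rewrite {1}/x -addrA (addrC (g t t y)) hg0 addr0.
Qed.
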